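(* Let $G$ be a finite simple graph of order $n$ and let $u$ be a vertex of $G$. Then \[\mathrm{dp}_{G^{c}}(u)=\big(\mathrm{dp}(G)-\mathrm{dp}_G(u)-x^{\deg_G u}\big)^{\curlywedge (n-1)-}.\]
   Context: For a vertex $w$ of a simple graph $\Gamma$, the degree polynomial $\mathrm{dp}_\Gamma(w)\in\mathbb{Z}[x]$ is the polynomial in which the coefficient of $x^{i}$ is the number of neighbors of $w$ in $\Gamma$ having degree $i$ in $\Gamma$ ($\mathrm{dp}_\Gamma(w)=0$ if $w$ is isolated). The degree polynomial of the graph $\Gamma$ is $\mathrm{dp}(\Gamma)=\sum_{i\ge0} t_i x^i$, where $t_i$ is the number of vertices of $\Gamma$ of degree $i$ (so $t_0$ counts isolated vertices). For a polynomial $f=\sum_i a_i x^i$ with nonnegative integer coefficients and $\deg f\le m$, $f^{\curlywedge m-}=\sum_i a_i x^{m-i}$ (and $0^{\curlywedge m-}=0$). $G^{c}$ denotes the complement of $G$: same vertex set, with two distinct vertices adjacent in $G^c$ iff they are not adjacent in $G$. *)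

From mathcomp Require Import all_boot all_order all_algebra.
Set Implicit Arguments. Unset Strict Implicit. Unset Printing Implicit Defensive.
Import GRing.Theory.
Local Open Scope ring_scope.

Definition simple_graph (T : finType) (e : rel T) : Prop :=
  symmetric e /\ irreflexive e.

Definition deg (T : finType) (e : rel T) (w : T) : nat := #|[pred v | e w v]|.

Definition compl_graph (T : finType) (e : rel T) : rel T :=
  fun x y => (x != y) && ~~ e x y.

Definition dpv (T : finType) (e : rel T) (w : T) : {poly int} :=
  \sum_(v | e w v) 'X^(deg e v).

Definition dpG (T : finType) (e : rel T) : {poly int} :=
  \sum_(v : T) 'X^(deg e v).

(* reflection f^{m-} = sum_{i<=m} a_i x^(m-i)  (used only for deg f <= m) *)
Definition refl_poly (m : nat) (f : {poly int}) : {poly int} :=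
  \sum_(i < m.+1) f`_i *: 'X^(m - i).

From mathcomp Require Import all_boot all_order all_algebra.
Local Open Scope ring_scope.
Import GRing.Theory.
Set Implicit Arguments.
Unset Strict Implicit.

(* Every vertex other than u is either a neighbour of u in G or in G^c, so
   deg_G v + deg_{G^c} v = n - 1. Hence splitting dp(G) at u leaves exactly
   the sum of x^(deg_G v) over the G^c-neighbours v of u, and reflecting each
   monomial x^(deg_G v) to x^(n - 1 - deg_G v) = x^(deg_{G^c} v) gives
   dp_{G^c}(u). *)

Section Degrees.

Variables (T : finType) (e : rel T).
Hypothesis e_irr : irreflexive e.

Lemma deg_compl_graphS (v : T) : (deg e v + deg (compl_graph e) v).+1 = #|T|.
Proof.
rewrite [RHS](cardD1 v) -(cardID (e v)) add1n; congr (_ + _).+1.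
  apply: eq_card => w; rewrite !inE andbT.
  by case: eqP => [->|_]; rewrite ?e_irr ?andbT.
by apply: eq_card => w; rewrite !inE andbT andbC eq_sym.
Qed.

Lemma deg_leq_card (v : T) : (deg e v <= #|T|.-1)%N.
Proof. by rewrite -(deg_compl_graphS v) leq_addr. Qed.

Lemma deg_compl_graph (v : T) : deg (compl_graph e) v = (#|T|.-1 - deg e v)%N.
Proof. by rewrite -(deg_compl_graphS v) /= addKn. Qed.

Lemma dpG_split (u : T) :
  dpG e = \sum_(v | compl_graph e u v) 'X^(deg e v) + (dpv e u + 'X^(deg e u)).
Proof.
rewrite /dpG /dpv (bigID (e u)) /=.
rewrite [\sum_(v | ~~ e u v) _](bigD1 u) ?e_irr // [RHS]addrC -addrA.
by congr (_ + (_ + _)); apply: eq_bigl => v; rewrite /compl_graph eq_sym andbC.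
Qed.

End Degrees.

Section Reflection.

Variable m : nat.

Lemma refl_polyD (f g : {poly int}) :
  refl_poly m (f + g) = refl_poly m f + refl_poly m g.
Proof. by rewrite /refl_poly -big_split; apply: eq_bigr => i _; rewrite coefD scalerDl. Qed.

Lemma refl_poly0 : refl_poly m 0 = 0.
Proof. by rewrite /refl_poly big1 // => i _; rewrite coef0 scale0r. Qed.

Lemma refl_polyXn (k : nat) : (k <= m)%N -> refl_poly m 'X^k = 'X^(m - k).
Proof.
move=> le_km; rewrite /refl_poly (bigD1 (inord k)) //= big1 => [|i ne_ik].
  by rewrite coefXn inordK // eqxx scale1r addr0.
rewrite coefXn; case: eqP => [eq_ik|]; last by rewrite scale0r.
by move: ne_ik; rewrite (_ : i = inord k) ?eqxx //; apply: val_inj; rewrite /= inordK.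
Qed.

Lemma refl_poly_sumXn (I : finType) (P : pred I) (k : I -> nat) :
  (forall i, P i -> k i <= m)%N ->
  refl_poly m (\sum_(i | P i) 'X^(k i)) = \sum_(i | P i) 'X^(m - k i).
Proof.
move=> le_km; rewrite (big_morph _ refl_polyD refl_poly0).
by apply: eq_bigr => i /le_km /refl_polyXn.
Qed.

End Reflection.

Theorem theorem4p19 (T : finType) (e : rel T) (u : T) :
  simple_graph e ->
  dpv (compl_graph e) u =
  refl_poly (#|T|.-1) (dpG e - dpv e u - 'X^(deg e u)).
Proof.
move=> [_ e_irr].
rewrite (dpG_split e_irr u) -addrA -opprD addrK.
rewrite refl_poly_sumXn => [|v _]; last exact: deg_leq_card.
by apply: eq_bigr => v _; rewrite deg_compl_graph.
Qed.
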